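(* Let $m=2$ and suppose $n>2k+2$ where $0\le k\le n-1$. Let $\mathcal{C}$ be the class of all complete acyclic $k$-bounded binary CP-nets over $n$ variables, over $\mathcal{X}_{swap}$. (1) If $|F^1(x)\cap L|\le n-2-2k$ for every $x\in\mathcal{X}_{swap}$, then $\mathcal{C}$ is learnable with membership queries to a limited oracle. (2) If $|F^1(x)\cap L|\le\lfloor\frac{n-1}{2}\rfloor-k-1$ for every $x\in\mathcal{X}_{swap}$, then $\mathcal{C}$ is learnable with membership queries to a malicious oracle. In either case the worst-case number of queries is in $O(n^2\mathcal{U}_k+e_{N^*}n\log_2(n))$, which is in $O(n^22^k\log_2(n)k^{O(\log_2(k))}+e_{N^*}n\log_2(n))$, where $e_{N^*}$ is the number of edges of the target $N^*$.
   Context: Variables $V=\{v_1,\dots,v_n\}$ with binary domains. An outcome assigns a value to every variable. A complete CP-net gives each $v_i$ a parent set $Pa(v_i)\subseteq V\setminus\{v_i\}$ and, for each assignment $\gamma$ to $Pa(v_i)$, a strict order on $D_{v_i}$; parents are non-dummy. Acyclic: the parent graph (edges $(v_j,v_i)$, $v_j\in Pa(v_i)$) is acyclic; $k$-bounded: all $|Pa(v_i)|\le k$. Improving flip: changing only $v_i$ to the value preferred under the order for context $o[Pa(v_i)]$; $o'\succ o$ iff a nonempty sequence of improving flips leads from $o$ to $o'$. A swap is an ordered pair $x=(x.1,x.2)$ of outcomes differing in exactly one variable $V(x)$; $\mathcal{X}_{swap}$ contains exactly one ordering of each such pair (fixed arbitrarily); the target concept is $c^*(x)=1$ iff $x.1\succ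 x.2$ under the target $N^*$. For $x\in\mathcal{X}_{swap}$, $F^1(x)$ is the set of swaps $x'\in\mathcal{X}_{swap}$ with $V(x')=V(x)$ whose outcomes differ from those of $x$ in exactly one variable other than $V(x)$. A set $L\subseteq\mathcal{X}_{swap}$ is fixed in advance by an adversary, and is unknown to the learner. A limited oracle answers a membership query for $x\notin L$ with $c^*(x)$ and for $x\in L$ with ''I don't know''; a malicious oracle answers $c^*(x)$ for $x\notin L$ and $1-c^*(x)$ for $x\in L$; both are persistent (same answer on repeated queries). A class is learnable with membership queries to a limited (malicious) oracle if some algorithm exactly identifies every target in the class using a number of queries polynomial in $n$, the size of the target (its total number of CPT statements), and $|L|$. $\mathcal{U}_k$ is the smallest size of a set $S\subseteq\{0,1\}^{n-1}$ whose projection onto every set of $k$ coordinates contains all $2^k$ vectors. *)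

From mathcomp Require Import all_boot.
Set Implicit Arguments. Unset Strict Implicit. Unset Printing Implicit Defensive.

Definition outcome (n : nat) := {ffun 'I_n -> bool}.

(* A (complete, binary) CP-net: parent sets and, for each variable, the
   preferred value as a function of the outcome (required below to depend
   only on the parents, i.e. it is a CPT indexed by parent assignments). *)
Record cpnet (n : nat) := CPNet {
  pa  : {ffun 'I_n -> {set 'I_n}};
  cpt : {ffun 'I_n -> {ffun outcome n -> bool}} }.

Definition cpt_local n (N : cpnet n) : Prop :=
  forall (i : 'I_n) (o o' : outcome n),
    (forall j, j \in pa N i -> o j = o' j) -> cpt N i o = cpt N i o'.

Definition no_self_parent n (N : cpnet n) : Prop :=
  forall i : 'I_n, i \notin pa N i.

Definition nondummy n (N : cpnet n) : Prop :=
  forall (i j : 'I_n), j \in pa N i ->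
    exists o o' : outcome n,
      (forall l, l != j -> o l = o' l) /\ cpt N i o != cpt N i o'.

Definition pa_edge n (N : cpnet n) : rel 'I_n := fun j i => j \in pa N i.

Definition acyclic n (N : cpnet n) : Prop :=
  forall i : 'I_n, ~~ [exists j, pa_edge N i j && connect (pa_edge N) j i].

Definition kbounded n (k : nat) (N : cpnet n) : Prop :=
  forall i : 'I_n, #|pa N i| <= k.

Definition in_class n (k : nat) (N : cpnet n) : Prop :=
  [/\ cpt_local N, no_self_parent N, nondummy N, acyclic N & kbounded k N].

Definition edges n (N : cpnet n) : nat := \sum_(i < n) #|pa N i|.

Definition flip n (N : cpnet n) : rel (outcome n) := fun o o' =>
  [exists i : 'I_n, [&& o' i == cpt N i o, o i != o' i &
                        [forall j : 'I_n, (j != i) ==> (o j == o' j)]]].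

(* o' is preferred to o: nonempty sequence of improving flips from o to o' *)
Definition succ n (N : cpnet n) (o' o : outcome n) : bool :=
  [exists o'' : outcome n, flip N o o'' && connect (flip N) o'' o'].

Definition swap (n : nat) := (outcome n * outcome n)%type.

Definition diffset n (o o' : outcome n) : {set 'I_n} := [set j | o j != o' j].

Definition is_swap n (x : swap n) : bool := #|diffset x.1 x.2| == 1.

(* X_swap: exactly one ordering of each swap pair *)
Definition valid_Xswap n (Xs : {set swap n}) : Prop :=
  (forall x, x \in Xs -> is_swap x) /\
  (forall o1 o2 : outcome n, is_swap (o1, o2) ->
     ((o1, o2) \in Xs) != ((o2, o1) \in Xs)).

Definition cstar n (N : cpnet n) (x : swap n) : bool := succ N x.1 x.2.

Definition F1 n (Xs : {set swap n}) (x : swap n) : {set swap n} :=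
  [set x' in Xs | (diffset x'.1 x'.2 == diffset x.1 x.2) &&
     (#|[set j | (j \notin diffset x.1 x.2) && (x'.1 j != x.1 j)]| == 1)].

(* oracles (persistent: they are functions of the query) *)
Definition limited_oracle n (N : cpnet n) (L : {set swap n}) : swap n -> option bool :=
  fun x => if x \in L then None else Some (cstar N x).

Definition malicious_oracle n (N : cpnet n) (L : {set swap n}) : swap n -> bool :=
  fun x => if x \in L then ~~ cstar N x else cstar N x.

(* adaptive membership-query learners: decision trees over the answers *)
Inductive qtree (Q A : Type) :=
  | Out of (Q -> bool)
  | Ask of Q & (A -> qtree Q A).

Fixpoint run n A (Xs : {set swap n}) (orc : swap n -> A) (t : qtree (swap n) A)
  : option ((swap n -> bool) * nat) :=
  match t with
  | Out h => Some (h, 0)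
  | Ask q k => if q \in Xs then
                 match run Xs orc (k (orc q)) with
                 | Some (h, c) => Some (h, c.+1)
                 | None => None
                 end
               else None
  end.

Definition learns n A (Xs : {set swap n}) (orc : swap n -> A) (N : cpnet n)
  (t : qtree (swap n) A) (B : nat) : Prop :=
  exists h q, run Xs orc t = Some (h, q) /\
    (forall x, x \in Xs -> h x = cstar N x) /\ q <= B.

Definition universal (m k : nat) (S : {set {ffun 'I_m -> bool}}) : bool :=
  [forall K : {set 'I_m}, (#|K| == k) ==>
     [forall v : {ffun 'I_m -> bool}, [exists s in S, [forall i in K, s i == v i]]]].

Definition Uk (n k : nat) : nat :=
  #|[arg min_(S < [set: {ffun 'I_n.-1 -> bool}] | universal k S) #|S|]|.

From mathcomp Require Import all_boot zify.
Set Implicit Arguments. Unset Strict Implicit. Unset Printing Implicit Defensive.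

(* An acyclic CP-net admits no cycle of improving flips: such a cycle would flip a
   variable v none of whose parents changes along it, and v can then only be flipped
   towards its (constant) preferred value.  Hence for a swap x on variable i, x.1 is
   preferred to x.2 iff x.1 i is the value that CPT(i) prefers in the context of x.2,
   and learning the target amounts to learning every CPT.

   An entry CPT(i)(o) is recovered from n swap queries: the swaps on i at o with the
   variable j flipped, for every j.  At most k of them (j a parent of i) see another
   context, and those with j <> i lie in F^1 of the swap at o, so at most
   1 + |F^1 ∩ L| of them are unanswered or corrupted; under either bound on
   |F^1 ∩ L| the majority answer is CPT(i)(o).

   With such exact CPT queries, CPT(i) is learnt by evaluating it on a k-universal
   set of contexts (U_k queries) and comparing it with its restriction to the parents
   P found so far (2^|P| queries): a disagreement exposes a missing parent, located by
   binary search with log n queries.  This costs U_k + 2^(k+1) + |Pa(i)| log n CPT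
   queries per variable, hence O(n^2 U_k + e n log n) membership queries, as
   2^k <= U_k. *)

(** * Adaptive query programs *)

Section QueryPrograms.
Variables Q A : Type.

Inductive qprog (X : Type) := Done of X | Query of Q & (A -> qprog X).

Fixpoint qbind X Y (m : qprog X) (f : X -> qprog Y) : qprog Y :=
  match m with
  | Done x => f x
  | Query q k => Query q (fun a => qbind (k a) f)
  end.

Variable orc : Q -> A.

Fixpoint qval X (m : qprog X) : X :=
  match m with Done x => x | Query q k => qval (k (orc q)) end.

Fixpoint qcost X (m : qprog X) : nat :=
  match m with Done _ => 0 | Query q k => (qcost (k (orc q))).+1 end.

Fixpoint qvalid X (P : pred Q) (m : qprog X) : bool :=
  match m with Done _ => true | Query q k => P q && qvalid P (k (orc q)) end.

Lemma qval_bind X Y (m : qprog X) (f : X -> qprog Y) :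
  qval (qbind m f) = qval (f (qval m)).
Proof. by elim: m => //= q k IH; rewrite IH. Qed.

Lemma qcost_bind X Y (m : qprog X) (f : X -> qprog Y) :
  qcost (qbind m f) = qcost m + qcost (f (qval m)).
Proof. by elim: m => //= q k IH; rewrite IH. Qed.

Lemma qvalid_bind X Y P (m : qprog X) (f : X -> qprog Y) :
  qvalid P (qbind m f) = qvalid P m && qvalid P (f (qval m)).
Proof. by elim: m => //= q k IH; rewrite IH andbA. Qed.

Fixpoint qmap I X (f : I -> qprog X) (xs : seq I) : qprog (seq X) :=
  match xs with
  | [::] => Done [::]
  | x :: xs' => qbind (f x) (fun y => qbind (qmap f xs') (fun ys => Done (y :: ys)))
  end.

Lemma qval_map I X (f : I -> qprog X) xs :
  qval (qmap f xs) = [seq qval (f x) | x <- xs].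
Proof. by elim: xs => //= x xs IH; rewrite !qval_bind IH. Qed.

Lemma qcost_map I X (f : I -> qprog X) xs :
  qcost (qmap f xs) = \sum_(x <- xs) qcost (f x).
Proof. by elim: xs => [|x xs IH]; rewrite ?big_nil ?big_cons //= !qcost_bind IH addn0. Qed.

Lemma qvalid_map I X P (f : I -> qprog X) xs :
  qvalid P (qmap f xs) = all (fun x => qvalid P (f x)) xs.
Proof. by elim: xs => //= x xs IH; rewrite !qvalid_bind IH andbT. Qed.

Definition qask (q : Q) : qprog A := Query q (@Done _).

Lemma qval_map_ask qs : qval (qmap qask qs) = map orc qs.
Proof. by rewrite qval_map. Qed.

Lemma qcost_map_ask qs : qcost (qmap qask qs) = size qs.
Proof. by rewrite qcost_map sum1_size. Qed.

End QueryPrograms.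

Arguments Done {Q A X}.
Arguments Query {Q A X}.
Arguments qask {Q A}.

Fixpoint qsubst Q1 A1 Q2 A2 X (g : Q1 -> qprog Q2 A2 A1) (m : qprog Q1 A1 X)
    : qprog Q2 A2 X :=
  match m with
  | Done x => Done x
  | Query q k => qbind (g q) (fun a => qsubst g (k a))
  end.

Section Substitution.
Variables (Q1 A1 Q2 A2 : Type) (orc1 : Q1 -> A1) (orc2 : Q2 -> A2).
Variable g : Q1 -> qprog Q2 A2 A1.
Hypothesis g_val : forall q, qval orc2 (g q) = orc1 q.

Lemma qval_subst X (m : qprog Q1 A1 X) : qval orc2 (qsubst g m) = qval orc1 m.
Proof. by elim: m => //= q k IH; rewrite qval_bind g_val IH. Qed.

Lemma qcost_subst X c (m : qprog Q1 A1 X) :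
  (forall q, qcost orc2 (g q) <= c) -> qcost orc2 (qsubst g m) <= c * qcost orc1 m.
Proof.
move=> g_cost; elim: m => //= q k IH.
by rewrite qcost_bind g_val mulnS leq_add.
Qed.

Lemma qvalid_subst X P (m : qprog Q1 A1 X) :
  (forall q, qvalid orc2 P (g q)) -> qvalid orc2 P (qsubst g m).
Proof. by move=> g_ok; elim: m => //= q k IH; rewrite qvalid_bind g_ok g_val IH. Qed.

End Substitution.

Fixpoint qtree_of n A (m : qprog (swap n) A (swap n -> bool)) : qtree (swap n) A :=
  match m with
  | Done h => Out _ h
  | Query q k => Ask q (fun a => qtree_of (k a))
  end.

Lemma run_qtree_of n A (Xs : {set swap n}) (orc : swap n -> A) m :
  qvalid orc (mem Xs) m -> run Xs orc (qtree_of m) = Some (qval orc m, qcost orc m).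
Proof. by elim: m => //= q k IH /andP[-> /IH ->]. Qed.

(** * Improving flips *)

Section Semantics.
Variables (n : nat) (N : cpnet n).
Hypotheses (Nlocal : cpt_local N) (Nirr : no_self_parent N) (Nacyc : acyclic N).
Local Notation outcome := (outcome n).

Lemma flipP (o o' : outcome) : flip N o o' ->
  exists i, [/\ o' i = cpt N i o, o i != o' i & forall j, j != i -> o j = o' j].
Proof.
case/existsP => i /and3P[/eqP o'i oi /forallP oj]; exists i; split=> // j ji.
by apply/eqP; have := oj j; rewrite ji.
Qed.

Lemma flip_changed (o o' : outcome) v : flip N o o' -> o v != o' v -> o' v = cpt N v o.
Proof.
case/flipP => i [o'i _ oj] ov; case: (eqVneq v i) => [-> // | vi].
by rewrite oj ?eqxx in ov.
Qed.

Lemma exists_parentless (F : {set 'I_n}) v0 : v0 \in F ->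
  exists2 v, v \in F & forall u, u \in pa N v -> u \notin F.
Proof.
pose ancestors v := [set u | connect (pa_edge N) u v].
move=> v0F; case: (arg_minnP (fun v => #|ancestors v|) v0F) => v vF vmin.
exists v => // u uv; apply/negP => uF.
have := vmin u uF; rewrite leqNgt => /negP; apply.
apply: proper_card; apply/properP; split.
  apply/subsetP => w; rewrite !inE => wu.
  by apply: connect_trans wu (connect1 _).
exists v; rewrite !inE ?connect0 //.
apply/negP => vu; move/negP: (Nacyc u); apply; apply/existsP; exists v.
by rewrite /pa_edge uv vu.
Qed.

Lemma path_flip_settles v c x s : path (flip N) x s ->
  {in x :: s, forall y, cpt N v y = c} ->
  (x v = c -> all (fun y : outcome => y v == c) s) /\
  (has (fun y : outcome => y v != x v) s -> last x s v = c).
Proof.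
elim: s x => [|y s IH] x //= /andP[xy ys] cptc.
have cx : cpt N v x = c by apply: cptc; rewrite mem_head.
have [IH1 IH2] := IH y ys (fun z zs => cptc z (mem_behead (s := x :: _) zs)).
have yc : y v != x v -> y v = c by rewrite eq_sym => /(flip_changed xy); rewrite cx.
have last_c : y v = c -> last y s v = c.
  move=> yv; have := mem_last y s; rewrite inE => /predU1P[-> // | ls].
  by apply/eqP; apply: (allP (IH1 yv)).
split=> [xc | ].
  have yv : y v = c by case: (eqVneq (y v) (x v)) => [-> | /yc].
  by rewrite yv eqxx IH1.
case: (eqVneq (y v) (x v)) => [yx | /yc yv] /=; last by move=> _; apply: last_c.
by rewrite -yx; apply: IH2.
Qed.

Lemma no_improving_cycle (o o' : outcome) : ~~ (flip N o o' && connect (flip N) o' o).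
Proof.
apply/negP => /andP[oo' /connectP[p o'p o_last]].
set s := o' :: p.
have os : path (flip N) o s by rewrite /= oo'.
have last_o : last o s = o by rewrite /= -o_last.
pose F := [set u | has (fun y : outcome => y u != o u) s].
have [i [_ oi _]] := flipP oo'.
have iF : i \in F by rewrite inE /= eq_sym oi.
have [v vF v_parentless] := exists_parentless iF.
have cpt_const : {in o :: s, forall y, cpt N v y = cpt N v o}.
  move=> y ys; apply: Nlocal => u uv; have := v_parentless u uv.
  rewrite inE => /hasPn s_u; case/predU1P: ys => [-> // | ys].
  by have := s_u y ys; rewrite negbK => /eqP.
have [all_c last_c] := path_flip_settles os cpt_const.
move: vF; rewrite inE => has_v.
have ov : o v = cpt N v o by rewrite -{1}last_o last_c.
have /allP s_c := all_c ov.
by case/hasP: has_v => y ys; rewrite (eqP (s_c y ys)) -ov eqxx.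
Qed.

Section Swap.
Variables (j : 'I_n) (a b : outcome).
Hypotheses (ab_off : forall l, l != j -> a l = b l) (ab_j : a j != b j).

Lemma cpt_swap_eq : cpt N j a = cpt N j b.
Proof.
apply: Nlocal => l lj; apply: ab_off; apply: contraTneq lj => ->; exact: Nirr.
Qed.

Lemma flip_swapE : flip N a b = (b j == cpt N j a).
Proof.
apply/idP/idP => [ab | /eqP bj]; first by rewrite (flip_changed ab).
apply/existsP; exists j; rewrite -bj eqxx ab_j /=.
by apply/forallP => l; apply/implyP => lj; rewrite ab_off.
Qed.

End Swap.

Lemma succ_swapE j (a b : outcome) :
  (forall l, l != j -> a l = b l) -> a j != b j -> succ N a b = (a j == cpt N j b).
Proof.
move=> ab_off ab_j.
have ba_off l : l != j -> b l = a l by move/ab_off.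
have ba_j : b j != a j by rewrite eq_sym.
case: (boolP (a j == cpt N j b)) => aj.
  by apply/existsP; exists a; rewrite connect0 andbT (flip_swapE ba_off ba_j).
apply/negbTE/existsP => -[o /andP[bo oa]].
have ab : flip N a b.
  rewrite (flip_swapE ab_off ab_j) (cpt_swap_eq ab_off).
  by move: aj ab_j; case: (a j); case: (b j); case: (cpt N j b).
by move/negP: (no_improving_cycle b o); apply; rewrite bo (connect_trans oa (connect1 ab)).
Qed.

End Semantics.

(** * Universal sets *)

Lemma exists_superset_card (T : finType) (A : {set T}) m : #|A| <= m <= #|T| ->
  exists2 B : {set T}, A \subset B & #|B| = m.
Proof.
move=> /andP[]; elim: m => [|m IH] Am mT.
  by exists A => //; apply/eqP; rewrite -leqn0.
case: (ltngtP #|A| m.+1) Am => // [Am _ | <- _]; last by exists A.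
have [B AB Bm] := IH Am (ltnW mT).
have : 0 < #|~: B| by rewrite cardsCs setCK Bm; lia.
case/card_gt0P => x; rewrite inE => xB.
exists (x |: B); first exact: subset_trans AB (subsetUr _ _).
by rewrite cardsU1 xB Bm.
Qed.

Section ZeroOff.
Variable T : finType.

Definition zero_off (K : {set T}) (f : {ffun T -> bool}) : {ffun T -> bool} :=
  [ffun l => if l \in K then f l else false].

Lemma zero_off_pffun (K : {set T}) f : zero_off K f \in pffun_on false K (@predT bool).
Proof.
apply/pffun_onP; split=> //; apply/subsetP => l.
by rewrite inE ffunE; case: (l \in K).
Qed.

Lemma card_zero_off_range (K : {set T}) : #|pffun_on false K (@predT bool)| = 2 ^ #|K|.
Proof. by rewrite card_pffun_on card_bool. Qed.

Lemma card_zero_off_image (K : {set T}) :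
  #|[set zero_off K f | f : {ffun T -> bool}]| <= 2 ^ #|K|.
Proof.
rewrite -card_zero_off_range; apply/subset_leq_card/subsetP => _ /imsetP[f _ ->].
exact: zero_off_pffun.
Qed.

End ZeroOff.

Section Universal.
Variables (m k : nat) (S : {set {ffun 'I_m -> bool}}).
Hypotheses (S_univ : universal k S) (km : k <= m).

Lemma universal_realizes (K : {set 'I_m}) (v : {ffun 'I_m -> bool}) : #|K| <= k ->
  exists2 s, s \in S & {in K, s =1 v}.
Proof.
move=> Kk; have [K' KK' K'k] : exists2 K' : {set 'I_m}, K \subset K' & #|K'| = k.
  by apply: exists_superset_card; rewrite Kk card_ord.
have /forallP/(_ K') := S_univ; rewrite K'k eqxx => /forallP/(_ v)/existsP[s].
case/andP=> sS /forallP sv; exists s => // l lK.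
by have := sv l; rewrite (subsetP KK' l lK) => /eqP.
Qed.

Lemma universal_card : 2 ^ k <= #|S|.
Proof.
have [K _ Kk] : exists2 K : {set 'I_m}, set0 \subset K & #|K| = k.
  by apply: exists_superset_card; rewrite cards0 card_ord.
rewrite -Kk -card_zero_off_range.
apply: leq_trans (leq_imset_card (zero_off K) S); apply/subset_leq_card/subsetP => f.
case/pffun_onP => f_supp _; have [s sS sf] := universal_realizes f (eq_leq Kk).
apply/imsetP; exists s => //; apply/ffunP => l; rewrite ffunE.
case: ifP => lK; first by rewrite sf.
apply/negbTE; apply: contraFN lK => fl.
by apply: (subsetP f_supp); rewrite inE fl.
Qed.

End Universal.

Definition univ_set n k : {set {ffun 'I_n.-1 -> bool}} :=
  [arg min_(S < [set: {ffun 'I_n.-1 -> bool}] | universal k S) #|S|].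

Lemma univ_set_universal n k : universal k (univ_set n k).
Proof.
rewrite /univ_set; case: arg_minnP => //.
apply/forallP => K; apply/implyP => _; apply/forallP => v; apply/existsP; exists v.
by rewrite inE; apply/forallP => x; apply/implyP.
Qed.

(* [Uk n k] unfolds to [#|univ_set n k|]. *)
Lemma expn_le_Uk n k : k <= n.-1 -> 2 ^ k <= Uk n k.
Proof. by move=> kn; apply: universal_card (univ_set_universal n k) kn. Qed.

(** * Learning the CPTs from exact CPT queries *)

Lemma size_halves T (D : seq T) p : size D <= 2 * p ->
  size (take (size D %/ 2) D) <= p /\ size (drop (size D %/ 2) D) <= p.
Proof. by rewrite size_take size_drop; case: ifP; lia. Qed.

Lemma rounds_cost_step (t c p L r : nat) : t <= 2 ^ c -> c < p ->
  r + 2 ^ c.+1 <= 2 ^ p.+1 + (p - c.+1) * L -> t + (L + r) + 2 ^ c <= 2 ^ p.+1 + (p - c) * L.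
Proof.
move=> tc cp; have -> : p - c = (p - c.+1).+1 by lia.
by rewrite mulSn expnS; lia.
Qed.

Definition cpt_oracle n (N : cpnet n) (q : 'I_n * outcome n) : bool := cpt N q.1 q.2.

Section CptLearner.
Variables (n k : nat).
Local Notation outcome := (outcome n).
Local Notation iprog := (qprog ('I_n * outcome) bool).
Local Notation S := (univ_set n k).

Definition embed (i : 'I_n) (s : {ffun 'I_n.-1 -> bool}) : outcome :=
  [ffun l => if unlift i l is Some l' then s l' else false].

Definition splice (D : seq 'I_n) (a b : outcome) : outcome :=
  [ffun l => if l \in D then b l else a l].

Definition cpt_table i (ps : seq outcome) : iprog (outcome -> bool) :=
  qbind (qmap qask [seq (i, p) | p <- ps])
        (fun ans => Done (fun o => nth false ans (index o ps))).

Fixpoint find_parent i fuel (a b : outcome) (D : seq 'I_n) (cpt_a : bool) : iprog 'I_n :=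
  match fuel with
  | 0 => Done (head i D)
  | fuel'.+1 =>
    let mid := splice (take (size D %/ 2) D) a b in
    Query (i, mid) (fun cpt_mid =>
      if cpt_mid != cpt_a then find_parent i fuel' a mid (take (size D %/ 2) D) cpt_a
      else find_parent i fuel' mid b (drop (size D %/ 2) D) cpt_mid)
  end.

(* Written [_ + 1] rather than [_.+1] so that [simpl] does not unfold
   [find_parent i log_fuel]. *)
Definition log_fuel := trunc_log 2 n + 1.

Fixpoint search_rounds i (t0 : outcome -> bool) fuel (P : {set 'I_n}) :
    iprog (outcome -> bool) :=
  match fuel with
  | 0 => Done (fun _ => false)
  | fuel'.+1 =>
    qbind (cpt_table i (enum [set zero_off P o | o : outcome])) (fun T =>
    match [pick s in S | t0 (embed i s) != T (zero_off P (embed i s))] with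
    | None => Done (fun o => T (zero_off P o))
    | Some s =>
        let a := zero_off P (embed i s) in
        qbind (find_parent i log_fuel a (embed i s) (enum (~: P)) (T a))
              (fun j => search_rounds i t0 fuel' (j |: P))
    end)
  end.

Definition learn_cpt i : iprog (outcome -> bool) :=
  qbind (cpt_table i [seq embed i s | s <- enum S])
        (fun t0 => search_rounds i t0 k.+1 set0).

Definition learn_cpts : iprog ('I_n -> outcome -> bool) :=
  qbind (qmap learn_cpt (enum 'I_n))
        (fun Gs => Done (fun j : 'I_n => nth (fun _ => false) Gs j)).

Variable N : cpnet n.
Hypotheses (Nlocal : cpt_local N) (Nirr : no_self_parent N) (Nnondummy : nondummy N).
Hypotheses (Nbound : kbounded k N) (kn : k <= n.-1).
Local Notation orc := (cpt_oracle N).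

Lemma qval_cpt_table i ps o : o \in ps -> qval orc (cpt_table i ps) o = cpt N i o.
Proof.
move=> ops; rewrite qval_bind /= qval_map_ask -map_comp.
by rewrite (nth_map o) ?index_mem // nth_index.
Qed.

Lemma qcost_cpt_table i ps : qcost orc (cpt_table i ps) = size ps.
Proof. by rewrite qcost_bind qcost_map_ask size_map addn0. Qed.

Lemma parent_in_diff i (a b : outcome) (D : seq 'I_n) :
  cpt N i a != cpt N i b -> (forall l, l \notin D -> a l = b l) ->
  exists2 j, j \in D & j \in pa N i.
Proof.
move=> ab ab_off; apply/hasP; apply: contraNT ab => /hasPn noD.
apply/eqP/Nlocal => l li; apply: ab_off; apply: contraL li; exact: noD.
Qed.

Lemma find_parent_spec i fuel (a b : outcome) D cpt_a :
  cpt N i a = cpt_a -> cpt N i b != cpt_a -> (forall l, l \notin D -> a l = b l) ->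
  size D <= 2 ^ fuel ->
  [/\ qval orc (find_parent i fuel a b D cpt_a) \in D,
      qval orc (find_parent i fuel a b D cpt_a) \in pa N i &
      qcost orc (find_parent i fuel a b D cpt_a) = fuel].
Proof.
elim: fuel a b D cpt_a => [|fuel IH] a b D _ <- ab ab_off /=.
  have [j jD jpa] : exists2 j, j \in D & j \in pa N i.
    by apply: parent_in_diff ab_off; rewrite eq_sym.
  case: D {ab ab_off} jD => [|j' [|? ?]] //=; rewrite inE => /eqP <- _.
  by rewrite inE eqxx.
rewrite /cpt_oracle /= expnS => sizeD.
set D1 := take _ D; set D2 := drop _ D; set mid := splice D1 a b.
have eD : D = D1 ++ D2 by rewrite cat_take_drop.
have a_mid l : l \notin D1 -> a l = mid l by rewrite /mid ffunE => /negbTE ->.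
have mid_b l : l \notin D2 -> mid l = b l.
  rewrite /mid ffunE; case: ifP => // lD1 lD2.
  by apply: ab_off; rewrite eD mem_cat lD1.
have [sizeD1 sizeD2] := size_halves sizeD.
case: ifP => [a_ne_mid | /negbFE/eqP mid_a].
  have [jD1 -> ->] := IH a mid D1 _ erefl a_ne_mid a_mid sizeD1.
  by rewrite eD mem_cat jD1.
have mid_ne_b : cpt N i b != cpt N i mid by rewrite mid_a.
have [jD2 -> ->] := IH mid b D2 _ erefl mid_ne_b mid_b sizeD2.
by rewrite eD mem_cat jD2 orbT.
Qed.

Lemma embed_realizes i (o : outcome) : exists2 s, s \in S & {in pa N i, embed i s =1 o}.
Proof.
pose K := [set l' | lift i l' \in pa N i].
have Kk : #|K| <= k.
  apply: leq_trans (Nbound i); rewrite -(card_imset K (@lift_inj _ i)).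
  by apply/subset_leq_card/subsetP => _ /imsetP[l' + ->]; rewrite inE.
have [s sS so] :=
  universal_realizes (univ_set_universal n k) kn [ffun l' => o (lift i l')] Kk.
exists s => // l li; rewrite ffunE.
case: unliftP => [l' el | eli]; last by move: li; rewrite eli (negbTE (Nirr i)).
by rewrite so ?ffunE -?el // inE -el.
Qed.

Lemma cpt_zero_off i (P : {set 'I_n}) o : pa N i \subset P ->
  cpt N i (zero_off P o) = cpt N i o.
Proof. by move=> paP; apply: Nlocal => l li; rewrite ffunE (subsetP paP). Qed.

Lemma missing_parent_detected i (P : {set 'I_n}) j : j \in pa N i -> j \notin P ->
  exists2 s, s \in S & cpt N i (embed i s) != cpt N i (zero_off P (embed i s)).
Proof.
move=> ji jP; have [o1 [o2 [o12 cpt12]]] := Nnondummy ji.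
have zero12 : zero_off P o1 = zero_off P o2.
  apply/ffunP => l; rewrite !ffunE; case: ifP => // lP.
  by rewrite o12 //; apply: contraTneq lP => ->.
have [o ho] : exists o, cpt N i o != cpt N i (zero_off P o).
  case: (eqVneq (cpt N i o1) (cpt N i (zero_off P o1))) => e1; last by exists o1.
  by exists o2; rewrite -zero12 -e1 eq_sym.
have [s sS so] := embed_realizes i o; exists s => //.
have -> : cpt N i (embed i s) = cpt N i o by apply: Nlocal.
suff -> : cpt N i (zero_off P (embed i s)) = cpt N i (zero_off P o) by [].
apply: Nlocal => l li.
by rewrite [zero_off P (embed i s) l]ffunE [zero_off P o l]ffunE so.
Qed.

Lemma search_rounds_spec i t0 fuel (P : {set 'I_n}) :
  (forall s, s \in S -> t0 (embed i s) = cpt N i (embed i s)) ->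
  P \subset pa N i -> #|pa N i| < fuel + #|P| ->
  (forall o, qval orc (search_rounds i t0 fuel P) o = cpt N i o) /\
  qcost orc (search_rounds i t0 fuel P) + 2 ^ #|P| <=
    2 ^ #|pa N i|.+1 + (#|pa N i| - #|P|) * log_fuel.
Proof.
move=> t0_ok; elim: fuel P => [|fuel IH] P Pi fuelP.
  by move: (subset_leq_card Pi) fuelP; lia.
have Pp := subset_leq_card Pi.
simpl search_rounds; rewrite qval_bind qcost_bind qcost_cpt_table -cardE.
set T := qval orc (cpt_table _ _).
have T_ok o : T (zero_off P o) = cpt N i (zero_off P o).
  by apply: qval_cpt_table; rewrite mem_enum imset_f.
have cost_T := card_zero_off_image P.
case: pickP => [s /andP[sS t0_T] | none].
- set a := zero_off P (embed i s).
  have a_off l : l \notin enum (~: P) -> a l = embed i s l.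
    by rewrite mem_enum inE negbK ffunE => ->.
  have sizeD : size (enum (~: P)) <= 2 ^ log_fuel.
    rewrite -cardE; apply: leq_trans (max_card _) _.
    by rewrite card_ord /log_fuel addn1 ltnW // trunc_log_ltn.
  have b_ne_a : cpt N i (embed i s) != T a by rewrite -t0_ok.
  have [jD ji cost_j] := find_parent_spec (esym (T_ok _)) b_ne_a a_off sizeD.
  rewrite qval_bind qcost_bind cost_j.
  move: jD ji; set j := qval orc (find_parent _ _ _ _ _ _); rewrite mem_enum inE => jP ji.
  have jPi : j |: P \subset pa N i by rewrite subUset sub1set ji.
  have [|IH1 IH2] := IH (j |: P) jPi; first by rewrite cardsU1 jP add1n addnS -addSn.
  split=> //; have := subset_leq_card jPi; rewrite cardsU1 jP add1n => Pp'.
  by apply: rounds_cost_step cost_T Pp' _; rewrite cardsU1 jP add1n in IH2.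
- have paP : pa N i \subset P.
    apply/subsetP => j ji; apply/negPn/negP => jP.
    have [s sS mismatch] := missing_parent_detected ji jP.
    by move: (none s); rewrite /= sS t0_ok // T_ok mismatch.
  split=> [o | ]; first by rewrite /= T_ok cpt_zero_off.
  rewrite /= addn0 expnS mul2n -addnn; apply: leq_trans (leq_addr _ _).
  have P_pa : 2 ^ #|P| <= 2 ^ #|pa N i| by rewrite leq_exp2l.
  exact: leq_add (leq_trans cost_T P_pa) P_pa.
Qed.

Lemma learn_cpt_spec i :
  (forall o, qval orc (learn_cpt i) o = cpt N i o) /\
  qcost orc (learn_cpt i) <= Uk n k + 2 * 2 ^ k + #|pa N i| * log_fuel.
Proof.
rewrite /learn_cpt qval_bind qcost_bind qcost_cpt_table size_map -cardE.
set t0 := qval orc (cpt_table _ _).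
have t0_ok s : s \in S -> t0 (embed i s) = cpt N i (embed i s).
  by move=> sS; apply: qval_cpt_table; rewrite map_f ?mem_enum.
have [|val_ok] := search_rounds_spec (fuel := k.+1) t0_ok (sub0set (pa N i)).
  by rewrite cards0 addn0 ltnS.
rewrite cards0 subn0 expn0 addn1 => /ltnW cost_ok; split=> //.
rewrite /Uk -/S -addnA leq_add2l; apply: leq_trans cost_ok _.
by rewrite leq_add2r expnS leq_mul2l leq_exp2l // Nbound orbT.
Qed.

Lemma learn_cpts_spec :
  (forall j o, qval orc learn_cpts j o = cpt N j o) /\
  qcost orc learn_cpts <= n * (Uk n k + 2 * 2 ^ k) + edges N * log_fuel.
Proof.
rewrite /learn_cpts qval_bind qcost_bind qval_map qcost_map /= addn0; split.
  move=> j o; rewrite (nth_map j) ?size_enum_ord // nth_ord_enum.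
  by have [-> _] := learn_cpt_spec j.
rewrite big_enum /= /edges big_distrl /=.
rewrite -[n in n * _]card_ord -sum_nat_const -big_split /=.
by apply: leq_sum => i _; have [_ ->] := learn_cpt_spec i.
Qed.

End CptLearner.

(** * Simulating a CPT query by a majority vote *)

Lemma cards_cover (T : finType) (A B C : {set T}) :
  ~: (A :|: B) \subset C -> #|T| <= #|A| + #|B| + #|C|.
Proof.
move=> ABC; have := subset_leq_card ABC; have := cardsC (A :|: B).
by rewrite cardsU; lia.
Qed.

Section MajorityVote.
Variables (n : nat) (Xs : {set swap n}).
Hypothesis HX : valid_Xswap Xs.
Local Notation outcome := (outcome n).

Definition set_at (i : 'I_n) (q : outcome) (b : bool) : outcome :=
  [ffun l => if l == i then b else q l].

Definition swap_at i q : swap n :=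
  if (set_at i q false, set_at i q true) \in Xs then (set_at i q false, set_at i q true)
  else (set_at i q true, set_at i q false).

Definition flip_at (j : 'I_n) (q : outcome) : outcome :=
  [ffun l => if l == j then ~~ q l else q l].

Definition probe i q j := swap_at i (flip_at j q).

Lemma swap_at_off i q l : l != i -> (swap_at i q).1 l = q l /\ (swap_at i q).2 l = q l.
Proof. by move=> li; rewrite /swap_at; case: ifP => _; rewrite !ffunE (negbTE li). Qed.

Lemma swap_at_var i q : (swap_at i q).1 i != (swap_at i q).2 i.
Proof. by rewrite /swap_at; case: ifP => _; rewrite !ffunE eqxx. Qed.

Lemma diffset_set_at i q : diffset (set_at i q false) (set_at i q true) = [set i].
Proof. by apply/setP => l; rewrite !inE !ffunE; case: (l == i); rewrite ?eqxx. Qed.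

Lemma diffset_swap_at i q : diffset (swap_at i q).1 (swap_at i q).2 = [set i].
Proof.
apply/setP => l; rewrite !inE; case: (eqVneq l i) => [-> | li]; first exact: swap_at_var.
by have [-> ->] := swap_at_off q li; rewrite eqxx.
Qed.

Lemma swap_at_in i q : swap_at i q \in Xs.
Proof.
have sw : is_swap (set_at i q false, set_at i q true).
  by rewrite /is_swap diffset_set_at cards1.
have := HX.2 _ _ sw; rewrite /swap_at; case: ifP => //= _.
by case: ((set_at i q true, set_at i q false) \in Xs).
Qed.

Lemma probe_F1 i q j : j != i -> probe i q j \in F1 Xs (swap_at i q).
Proof.
move=> ji; rewrite inE swap_at_in !diffset_swap_at eqxx /=.
apply/cards1P; exists j; apply/setP => l; rewrite !inE.
case: (eqVneq l i) => [-> | li] /=; first by rewrite eq_sym (negbTE ji).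
have [-> _] := swap_at_off (flip_at j q) li; have [-> _] := swap_at_off q li.
by rewrite ffunE; case: (l == j); case: (q l).
Qed.

Lemma probe_inj i q : {in [set j | j != i] &, injective (probe i q)}.
Proof.
move=> j1 j2; rewrite !inE => j1i _ e; apply/eqP; apply: contraT => j12.
have := congr1 (fun x : swap n => x.1 j1) e; rewrite /probe.
have [-> _] := swap_at_off (flip_at j1 q) j1i; have [-> _] := swap_at_off (flip_at j2 q) j1i.
by rewrite !ffunE eqxx (negbTE j12); case: (q j1).
Qed.

Lemma card_probes_in (L : {set swap n}) i q :
  #|[set j | probe i q j \in L]| <= 1 + #|F1 Xs (swap_at i q) :&: L|.
Proof.
pose J := [set j | (j != i) && (probe i q j \in L)].
apply: leq_trans (_ : #|i |: J| <= _).
  by apply/subset_leq_card/subsetP => j; rewrite !inE; case: (j == i).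
rewrite cardsU1 leq_add ?leq_b1 //.
have injJ : {in J &, injective (probe i q)}.
  by move=> j1 j2; rewrite !inE => /andP[j1i _] /andP[j2i _]; apply: probe_inj; rewrite inE.
rewrite -(card_in_imset injJ); apply/subset_leq_card/subsetP => _ /imsetP[j + ->].
by rewrite inE => /andP[ji jL]; rewrite inE jL probe_F1.
Qed.

(* [dec] reads an oracle answer as an optional claimed value of c*, [None] meaning
   "I don't know".  By [cstar_swap_at] below, a correct claim c*(x) decodes to the
   entry [x.1 i == c*(x)] of CPT(i) at the context of [x]. *)
Variables (A : Type) (dec : A -> option bool).

Definition vote i (x : swap n) (a : A) : option bool := omap (fun c => x.1 i == c) (dec a).

Definition probe_vote i q j : qprog (swap n) A (option bool) :=
  qbind (qask (probe i q j)) (fun a => Done (vote i (probe i q j) a)).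

Definition majority_cpt i q : qprog (swap n) A bool :=
  qbind (qmap (probe_vote i q) (enum 'I_n)) (fun vs =>
    Done (count_mem (Some false) vs < count_mem (Some true) vs)).

Lemma qcost_majority_cpt (orc : swap n -> A) i q : qcost orc (majority_cpt i q) = n.
Proof. by rewrite qcost_bind qcost_map addn0 sum1_size size_enum_ord. Qed.

Lemma qvalid_majority_cpt (orc : swap n -> A) i q : qvalid orc (mem Xs) (majority_cpt i q).
Proof. by rewrite qvalid_bind qvalid_map andbT; apply/allP => j _; rewrite /= swap_at_in. Qed.

Lemma qval_majority_cpt (orc : swap n -> A) i q (c : bool) :
  let votes b := #|[set j | vote i (probe i q j) (orc (probe i q j)) == Some b]| in
  votes (~~ c) < votes c -> qval orc (majority_cpt i q) = c.
Proof.
move=> votes majority; rewrite qval_bind qval_map /=.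
have count_votes b :
    count_mem (Some b) [seq qval orc (probe_vote i q j) | j <- enum 'I_n] = votes b.
  rewrite count_map /votes cardE /enum_mem size_filter -enumT count_filter.
  by apply: eq_count => j; rewrite /= !inE andbT eq_sym.
rewrite !count_votes; case: c majority => //= majority.
by apply/negbTE; rewrite -leqNgt ltnW.
Qed.

End MajorityVote.

Section Oracles.
Variables (n k : nat) (Xs : {set swap n}) (N : cpnet n) (L : {set swap n}).
Hypothesis HX : valid_Xswap Xs.
Hypotheses (Nlocal : cpt_local N) (Nirr : no_self_parent N) (Nacyc : acyclic N).
Hypotheses (Nbound : kbounded k N) (nk : 2 * k + 2 < n).
Local Notation outcome := (outcome n).
Local Notation probe := (probe Xs).
Local Notation corrupted i q := [set j | probe i q j \in L].

Lemma cstar_swap_at i q : cstar N (swap_at Xs i q) = ((swap_at Xs i q).1 i == cpt N i q).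
Proof.
have off l : l != i -> (swap_at Xs i q).1 l = (swap_at Xs i q).2 l.
  by move=> li; have [-> ->] := swap_at_off Xs q li.
rewrite /cstar (succ_swapE Nlocal Nirr Nacyc off (swap_at_var Xs i q)).
congr (_ == _); apply: Nlocal => l li.
have li' : l != i by apply: contraTneq li => ->; exact: Nirr.
by have [_ ->] := swap_at_off Xs q li'.
Qed.

Lemma cpt_flip_at_nonparent i q j : j \notin pa N i -> cpt N i (flip_at j q) = cpt N i q.
Proof.
move=> ji; apply: Nlocal => l li; rewrite ffunE.
by case: (eqVneq l j) li => [-> | //]; rewrite (negbTE ji).
Qed.

Lemma vote_limited i q j :
  vote id i (probe i q j) (limited_oracle N L (probe i q j)) =
  if probe i q j \in L then None else Some (cpt N i (flip_at j q)).
Proof.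
rewrite /vote /limited_oracle /probe; case: ifP => //= _; rewrite cstar_swap_at.
by case: ((swap_at Xs i (flip_at j q)).1 i); case: (cpt N i (flip_at j q)).
Qed.

Lemma vote_malicious i q j :
  vote Some i (probe i q j) (malicious_oracle N L (probe i q j)) =
  Some ((probe i q j \in L) (+) cpt N i (flip_at j q)).
Proof.
rewrite /vote /malicious_oracle /probe; case: ifP => /= _; rewrite cstar_swap_at;
  by case: ((swap_at Xs i (flip_at j q)).1 i); case: (cpt N i (flip_at j q)).
Qed.

Lemma qval_majority_limited i q :
  (forall x, x \in Xs -> #|F1 Xs x :&: L| <= n - 2 - 2 * k) ->
  qval (limited_oracle N L) (majority_cpt Xs id i q) = cpt N i q.
Proof.
move=> HL; apply: qval_majority_cpt => /=.
set bad := [set j | _ == Some (~~ _)]; set good := [set j | _ == Some _].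
have bad_pa : bad \subset pa N i.
  apply/subsetP => j; rewrite inE vote_limited; case: ifP => // _ /eqP[] e.
  apply/negPn/negP => ji; move: e; rewrite cpt_flip_at_nonparent //.
  by case: (cpt N i q).
have good_cover : ~: (pa N i :|: corrupted i q) \subset good.
  apply/subsetP => j; rewrite !inE negb_or vote_limited => /andP[ji /negbTE ->].
  by rewrite cpt_flip_at_nonparent.
have few_bad : #|bad| <= k := leq_trans (subset_leq_card bad_pa) (Nbound i).
have few_corrupted : #|corrupted i q| <= n - 1 - 2 * k.
  apply: leq_trans (card_probes_in HX L i q) _.
  have few_F1 : #|F1 Xs (swap_at Xs i q) :&: L| <= n - 2 - 2 * k := HL _ (swap_at_in HX i q).
  lia.
have many_good : n <= #|pa N i| + #|corrupted i q| + #|good|.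
  by rewrite -{1}(card_ord n); apply: cards_cover.
have few_parents : #|pa N i| <= k := Nbound i.
suff : #|bad| < #|good| by [].
lia.
Qed.

Lemma qval_majority_malicious i q :
  (forall x, x \in Xs -> #|F1 Xs x :&: L| <= (n - 1) %/ 2 - k - 1) ->
  qval (malicious_oracle N L) (majority_cpt Xs Some i q) = cpt N i q.
Proof.
move=> HL; apply: qval_majority_cpt => /=.
set bad := [set j | _ == Some (~~ _)]; set good := [set j | _ == Some _].
have bad_cover : bad \subset pa N i :|: corrupted i q.
  apply/subsetP => j; rewrite !inE vote_malicious => /eqP[].
  case: (_ \in L); rewrite ?orbT //= orbF => e.
  apply/negPn/negP => ji; move: e; rewrite cpt_flip_at_nonparent //.
  by case: (cpt N i q).
have good_cover : ~: (set0 :|: bad) \subset good.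
  apply/subsetP => j; rewrite set0U !inE vote_malicious.
  by case: (_ (+) _); case: (cpt N i q).
have few_bad : #|bad| <= #|pa N i| + #|corrupted i q|.
  exact: leq_trans (subset_leq_card bad_cover) (leq_card_setU _ _).1.
have few_parents : #|pa N i| <= k := Nbound i.
have few_F1 : #|F1 Xs (swap_at Xs i q) :&: L| <= (n - 1) %/ 2 - k - 1 :=
  HL _ (swap_at_in HX i q).
have few_corrupted : #|corrupted i q| <= 1 + #|F1 Xs (swap_at Xs i q) :&: L| :=
  card_probes_in HX L i q.
have all_votes : n <= #|bad| + #|good|.
  by move: (cards_cover good_cover); rewrite card_ord cards0 => h; exact: h.
suff : #|bad| < #|good| by [].
lia.
Qed.

End Oracles.

Definition swap_hyp n (G : 'I_n -> outcome n -> bool) (x : swap n) : bool :=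
  if [pick j in diffset x.1 x.2] is Some j then x.1 j == G j x.2 else false.

Lemma swap_hyp_cstar n (N : cpnet n) (G : 'I_n -> outcome n -> bool) (x : swap n) :
  cpt_local N -> no_self_parent N -> acyclic N ->
  (forall j o, G j o = cpt N j o) -> is_swap x -> swap_hyp G x = cstar N x.
Proof.
move=> Nlocal Nirr Nacyc G_ok /cards1P[j xj].
rewrite /swap_hyp; case: pickP => [j' | /(_ j)]; last by rewrite xj inE eqxx.
rewrite xj inE => /eqP -> {j'}; rewrite G_ok /cstar (succ_swapE Nlocal Nirr Nacyc (j := j)) //.
  move=> l lj; apply/eqP; apply: contraNT lj => x_l.
  have : l \in diffset x.1 x.2 by rewrite inE.
  by rewrite xj inE.
by move: (set11 j); rewrite -xj inE.
Qed.

Definition learner n k (Xs : {set swap n}) A (dec : A -> option bool) :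
    qprog (swap n) A (swap n -> bool) :=
  qbind (qsubst (fun iq : 'I_n * outcome n => majority_cpt Xs dec iq.1 iq.2) (learn_cpts n k))
        (fun G => Done (swap_hyp G)).

Lemma learner_learns n k (Xs : {set swap n}) (N : cpnet n) A (dec : A -> option bool)
    (orc : swap n -> A) :
  valid_Xswap Xs -> in_class k N -> 2 * k + 2 < n ->
  (forall i q, qval orc (majority_cpt Xs dec i q) = cpt N i q) ->
  learns Xs orc N (qtree_of (learner k Xs dec))
    (3 * (n ^ 2 * Uk n k + edges N * n * trunc_log 2 n)).
Proof.
move=> HX [Nlocal Nirr Nnondummy Nacyc Nbound] nk majority_ok.
have kn : k <= n.-1 by lia.
have [G_ok G_cost] := learn_cpts_spec Nlocal Nirr Nnondummy Nbound kn.
have g_val (iq : 'I_n * outcome n) :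
    qval orc (majority_cpt Xs dec iq.1 iq.2) = cpt_oracle N iq.
  by case: iq; exact: majority_ok.
set m := learner k Xs dec.
exists (qval orc m), (qcost orc m); split; [|split].
- apply: run_qtree_of; rewrite qvalid_bind andbT.
  by apply: (qvalid_subst g_val) => iq; apply: qvalid_majority_cpt.
- move=> x xX; rewrite qval_bind /= (qval_subst g_val).
  by apply: swap_hyp_cstar => //; apply: HX.1.
rewrite qcost_bind addn0.
have cost_m := qcost_subst g_val (c := n) (learn_cpts n k)
  (fun iq => eq_leq (qcost_majority_cpt _ _ _ _ _)).
apply: leq_trans (leq_trans cost_m (leq_mul (leqnn n) G_cost)) _.
have Uk_ge := expn_le_Uk kn.
have log_gt0 : 0 < trunc_log 2 n by rewrite trunc_log_gt0; lia.
rewrite /log_fuel; nia.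
Qed.

Theorem corollary3 :
  exists C : nat, forall n k : nat, 2 * k + 2 < n ->
  forall Xs : {set swap n}, valid_Xswap Xs ->
  (exists t : qtree (swap n) (option bool),
     forall (N : cpnet n), in_class k N ->
     forall L : {set swap n}, L \subset Xs ->
     (forall x, x \in Xs -> #|F1 Xs x :&: L| <= n - 2 - 2 * k) ->
     learns Xs (limited_oracle N L) N t
       (C * (n ^ 2 * Uk n k + edges N * n * trunc_log 2 n)))
  /\
  (exists t : qtree (swap n) bool,
     forall (N : cpnet n), in_class k N ->
     forall L : {set swap n}, L \subset Xs ->
     (forall x, x \in Xs -> #|F1 Xs x :&: L| <= (n - 1) %/ 2 - k - 1) ->
     learns Xs (malicious_oracle N L) N t
       (C * (n ^ 2 * Uk n k + edges N * n * trunc_log 2 n))).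
Proof.
exists 3 => n k nk Xs HX; split.
- exists (qtree_of (learner k Xs id)) => N HN L _ HL.
  apply: learner_learns => // i q; case: HN => Nlocal Nirr _ Nacyc Nbound.
  exact: qval_majority_limited.
- exists (qtree_of (learner k Xs Some)) => N HN L _ HL.
  apply: learner_learns => // i q; case: HN => Nlocal Nirr _ Nacyc Nbound.
  exact: qval_majority_malicious.
Qed.
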